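(* Let $d,T\ge 1$ be integers, let $c\ge 0$, and let $\boldsymbol\theta_0,\dots,\boldsymbol\theta_{T-1}\in\mathbb{R}^{d\times d}$ be orthogonal matrices. Define $\lambda_T=0$ and, for $t=T-1,\dots,0$, $\lambda_t=\frac{c(1+\lambda_{t+1})}{1+c+\lambda_{t+1}}$ (so $\lambda_{T-1}=\frac{c}{1+c}$), and set $\alpha_t=\frac{c}{1+\lambda_{t+1}+c}$ for $t=0,\dots,T-1$. Let $Z_0^{\parallel},\dots,Z_{T}^{\parallel}\subseteq\mathbb{R}^d$ be linear subspaces with $\boldsymbol\theta_t Z_t^{\parallel}=Z_{t+1}^{\parallel}$ for all $t$, let $\mathbf{P}_t$ be the orthogonal projection onto $Z_t^{\parallel}$, and define the feedback controls $\pi_t(\mathbf{x})=-(1-\alpha_t)(\mathbf{I}-\mathbf{P}_t)\mathbf{x}$. Let $\mathbf{x}_0\in Z_0^{\parallel}$ and let $\mathbf{x}_{t+1}=\boldsymbol\theta_t\mathbf{x}_t$ (unperturbed, uncontrolled trajectory). Let $\mathbf{z}=\mathbf{z}^{\parallel}+\mathbf{z}^{\perp}$ with $\mathbf{z}^{\parallel}\in Z_0^{\parallel}$ and $\mathbf{z}^{\perp}\in (Z_0^{\parallel})^{\perp}$, and define the perturbed controlled trajectory $\overline{\mathbf{x}}_0=\mathbf{x}_0+\mathbf{z}$, $\overline{\mathbf{x}}_{t+1}=\boldsymbol\theta_t(\overline{\mathbf{x}}_t+\pi_t(\overline{\mathbf{x}}_t))$. Then for every $1\le t\le T$, $$\lVert\overline{\mathbf{x}}_t-\mathbf{x}_t\rVert_2^2=\Big(\prod_{s=0}^{t-1}\alpha_s^2\Big)\lVert\mathbf{z}^{\perp}\rVert_2^2+\lVert\mathbf{z}^{\parallel}\rVert_2^2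 .$$
   Context: This models a $T$-layer network whose layer maps are linearized as orthogonal matrices $\boldsymbol\theta_t$, with a linear ''embedding subspace'' $Z_t^{\parallel}$ of the data at each layer (the unperturbed input lies in $Z_0^{\parallel}$). The control $\pi_t$ is the analytic optimal feedback control $\pi_t(\mathbf{x})=-\mathbf{V}_t\,\mathrm{diag}(0,\dots,0,1-\alpha_t,\dots,1-\alpha_t)\mathbf{V}_t^\top\mathbf{x}$, where $\mathbf{V}_t$ is an orthogonal matrix whose first columns span $Z_t^{\parallel}$ and whose remaining columns (those with entry $1-\alpha_t$) span its orthogonal complement; this equals $-(1-\alpha_t)(\mathbf{I}-\mathbf{P}_t)\mathbf{x}$. *)

From mathcomp Require Import all_boot all_order all_algebra.
Set Implicit Arguments. Unset Strict Implicit. Unset Printing Implicit Defensive.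
Import Order.TTheory GRing.Theory Num.Theory.
Local Open Scope ring_scope.

(* A linear subspace of R^d is
   represented (mxalgebra style) by a matrix whose ROW space is the subspace;
   a column vector x belongs to it iff (x^T <= Z)%MS. *)
Definition in_sub (R : fieldType) (d : nat) (x : 'cV[R]_d) (Z : 'M[R]_d) : bool :=
  (x^T <= Z)%MS.

Definition sqnorm (R : ringType) (d : nat) (x : 'cV[R]_d) : R :=
  \sum_(i < d) (x i 0) ^+ 2.

Definition dotv (R : ringType) (d : nat) (x y : 'cV[R]_d) : R :=
  \sum_(i < d) x i 0 * y i 0.

Definition orthogonal_mx (R : ringType) (d : nat) (A : 'M[R]_d) : Prop :=
  A^T *m A = 1%:M.

Definition in_orth_compl (R : fieldType) (d : nat) (x : 'cV[R]_d) (Z : 'M[R]_d) : Prop :=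
  forall y : 'cV[R]_d, in_sub y Z -> dotv y x = 0.

Definition is_orth_proj (R : fieldType) (d : nat) (P Z : 'M[R]_d) : Prop :=
  [/\ P^T = P, P *m P = P & forall x : 'cV[R]_d, in_sub x Z <-> P *m x = x].

Fixpoint lam_aux (R : fieldType) (c : R) (k : nat) : R :=
  match k with
  | 0 => 0
  | k'.+1 => let l := lam_aux c k' in c * (1 + l) / (1 + c + l)
  end.

Definition lambda (R : fieldType) (c : R) (T t : nat) : R := lam_aux c (T - t).

Definition alpha (R : fieldType) (c : R) (T t : nat) : R :=
  c / (1 + lambda c T t.+1 + c).

Definition control (R : fieldType) (d : nat) (c : R) (T : nat)
  (P : nat -> 'M[R]_d) (t : nat) (x : 'cV[R]_d) : 'cV[R]_d :=
  - ((1 - alpha c T t) *: ((1%:M - P t) *m x)).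

Fixpoint traj (R : ringType) (d : nat) (theta : nat -> 'M[R]_d) (x0 : 'cV[R]_d)
  (t : nat) : 'cV[R]_d :=
  match t with
  | 0 => x0
  | t'.+1 => theta t' *m traj theta x0 t'
  end.

Fixpoint ctraj (R : fieldType) (d : nat) (c : R) (T : nat)
  (theta P : nat -> 'M[R]_d) (xb0 : 'cV[R]_d) (t : nat) : 'cV[R]_d :=
  match t with
  | 0 => xb0
  | t'.+1 => let y := ctraj c T theta P xb0 t' in
             theta t' *m (y + control c T P t' y)
  end.

(* Orthogonality of the layer maps transports the splitting R^d = Z_t (+) Z_t^perp
   along the network and preserves norms.  The control is the identity on Z_t and
   multiplies Z_t^perp by alpha_t, so the perturbed trajectory is the unperturbed
   one plus the transported z^par plus the transported z^perp scaled by
   alpha_0 ... alpha_(t-1); Pythagoras then gives the identity. *)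
From mathcomp Require Import all_boot all_order all_algebra.
From mathcomp Require Import ring.
Import Order.TTheory GRing.Theory Num.Theory.
Local Open Scope ring_scope.

Section InnerProduct.
Variables (R : comNzRingType) (d : nat).
Implicit Types (x y u v : 'cV[R]_d) (A : 'M[R]_d).

Lemma sqnormE x : sqnorm x = (x^T *m x) 0 0.
Proof. by rewrite /sqnorm mxE; apply: eq_bigr => i _; rewrite !mxE expr2. Qed.

Lemma dotvE x y : dotv x y = (x^T *m y) 0 0.
Proof. by rewrite /dotv mxE; apply: eq_bigr => i _; rewrite !mxE. Qed.

Lemma dotvZr x y (b : R) : dotv x (b *: y) = b * dotv x y.
Proof. by rewrite /dotv mulr_sumr; apply: eq_bigr => i _; rewrite mxE mulrCA. Qed.

Lemma dotv_orthogonal_mx A x y : orthogonal_mx A -> dotv (A *m x) (A *m y) = dotv x y.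
Proof. by move=> oA; rewrite !dotvE trmx_mul -mulmxA (mulmxA A^T) oA mul1mx. Qed.

Lemma sqnorm_orthogonal_mx A x : orthogonal_mx A -> sqnorm (A *m x) = sqnorm x.
Proof. by move=> oA; rewrite !sqnormE trmx_mul -mulmxA (mulmxA A^T) oA mul1mx. Qed.

Lemma sqnormDZ_orth u v (b : R) : dotv u v = 0 ->
  sqnorm (u + b *: v) = sqnorm u + b ^+ 2 * sqnorm v.
Proof.
move=> uv; rewrite /sqnorm.
rewrite (eq_bigr (fun i => u i 0 ^+ 2 + b *+ 2 * (u i 0 * v i 0) + b ^+ 2 * v i 0 ^+ 2));
  last by move=> i _; rewrite !mxE; ring.
by rewrite !big_split /= -!mulr_sumr -/(dotv u v) uv mulr0 addr0.
Qed.

End InnerProduct.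

Section Projection.
Context {R : realFieldType} {d : nat}.
Implicit Types (x v : 'cV[R]_d) (P Z : 'M[R]_d).

Lemma sqnorm_eq0 x : sqnorm x = 0 -> x = 0.
Proof.
rewrite /sqnorm => /eqP; rewrite psumr_eq0 => [/allP x0|i _]; last exact: sqr_ge0.
apply/matrixP => i j; rewrite ord1 mxE.
by apply/eqP; rewrite -sqrf_eq0; apply: x0; apply: mem_index_enum.
Qed.

Lemma in_orth_complZ v Z (b : R) : in_orth_compl v Z -> in_orth_compl (b *: v) Z.
Proof. by move=> vZ y yZ; rewrite dotvZr vZ ?mulr0. Qed.

(* [P v] lies in Z, so it is orthogonal to v, and <P v, v> = <P v, P v> since P is
   a symmetric idempotent. *)
Lemma orth_proj_compl P Z v : is_orth_proj P Z -> in_orth_compl v Z -> P *m v = 0.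
Proof.
case=> PT PP PZ vZ; apply: sqnorm_eq0.
have /vZ : in_sub (P *m v) Z by apply/PZ; rewrite mulmxA PP.
rewrite dotvE sqnormE trmx_mul PT => vPv0.
by rewrite -mulmxA (mulmxA P) PP mulmxA.
Qed.

End Projection.
Arguments orth_proj_compl {R d P Z v}.

Lemma control_split (R : realFieldType) (d : nat) (c : R) (T t : nat)
    (P : nat -> 'M[R]_d) (Zt : 'M[R]_d) (u v : 'cV[R]_d) :
    is_orth_proj (P t) Zt -> in_sub u Zt -> in_orth_compl v Zt ->
  (u + v) + control c T P t (u + v) = u + alpha c T t *: v.
Proof.
move=> Pt uZ vZ; have [_ _ /(_ u) [Pu _]] := Pt.
rewrite /control mulmxBl mul1mx mulmxDr Pu // (orth_proj_compl Pt vZ) addr0.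
by rewrite [u + v - u]addrC addKr scalerBl scale1r opprB addrA addrAC addrK.
Qed.
Arguments control_split {R d c T t P Zt u v}.

Lemma trajD (R : nzRingType) (d : nat) (theta : nat -> 'M[R]_d) (x y : 'cV[R]_d) t :
  traj theta (x + y) t = traj theta x t + traj theta y t.
Proof. by elim: t => //= t ->; rewrite mulmxDr. Qed.

Section Transport.
Context {R : realFieldType} {d T : nat} {theta Z : nat -> 'M[R]_d}.
Hypothesis theta_orth : forall t, (t < T)%N -> orthogonal_mx (theta t).
Hypothesis theta_Z : forall t, (t < T)%N -> (Z t *m (theta t)^T :=: Z t.+1)%MS.

Lemma sqnorm_traj x t : (t <= T)%N -> sqnorm (traj theta x t) = sqnorm x.
Proof.
elim: t => //= t IH tT.
rewrite sqnorm_orthogonal_mx; last exact: theta_orth.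
exact (IH (ltnW tT)).
Qed.

Lemma traj_in_sub x t : in_sub x (Z 0) -> (t <= T)%N -> in_sub (traj theta x t) (Z t).
Proof.
move=> xZ; elim: t => //= t IH tT.
rewrite /in_sub -(theta_Z _ tT) trmx_mul submxMr //; exact: IH (ltnW tT).
Qed.

Lemma traj_in_orth_compl v t :
  in_orth_compl v (Z 0) -> (t <= T)%N -> in_orth_compl (traj theta v t) (Z t).
Proof.
move=> vZ; elim: t => //= t IH tT y.
rewrite /in_sub -(theta_Z _ tT) => /submxP [D yD].
have -> : y = theta t *m (D *m Z t)^T by rewrite -[y]trmxK yD !trmx_mul trmxK mulmxA.
rewrite dotv_orthogonal_mx; last exact: theta_orth.
by apply: (IH (ltnW tT)); rewrite /in_sub trmxK submxMl.
Qed.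

Context {c : R} {P : nat -> 'M[R]_d}.
Hypothesis P_proj : forall t, (t <= T)%N -> is_orth_proj (P t) (Z t).

Lemma ctraj_split u v t : in_sub u (Z 0) -> in_orth_compl v (Z 0) -> (t <= T)%N ->
  ctraj c T theta P (u + v) t =
    traj theta u t + (\prod_(s < t) alpha c T s) *: traj theta v t.
Proof.
move=> uZ vZ; elim: t => [|t IH tT] /=; first by rewrite big_ord0 scale1r.
have tT' := ltnW tT.
rewrite IH // (control_split (P_proj _ tT')).
- by rewrite big_ord_recr /= scalerA mulrC mulmxDr -scalemxAr.
- exact: traj_in_sub.
- exact/in_orth_complZ/traj_in_orth_compl.
Qed.

End Transport.

Theorem theorem1 (R : realFieldType) (d T : nat) (hd : (1 <= d)%N) (hT : (1 <= T)%N)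
  (c : R) (hc : 0 <= c)
  (theta : nat -> 'M[R]_d) (Z : nat -> 'M[R]_d) (P : nat -> 'M[R]_d)
  (htheta : forall t, (t < T)%N -> orthogonal_mx (theta t))
  (hZ : forall t, (t < T)%N -> (Z t *m (theta t)^T :=: Z t.+1)%MS)
  (hP : forall t, (t <= T)%N -> is_orth_proj (P t) (Z t))
  (x0 zpar zperp : 'cV[R]_d)
  (hx0 : in_sub x0 (Z 0%N))
  (hzpar : in_sub zpar (Z 0%N))
  (hzperp : in_orth_compl zperp (Z 0%N)) :
  forall t, (1 <= t <= T)%N ->
    sqnorm (ctraj c T theta P (x0 + (zpar + zperp)) t - traj theta x0 t) =
      (\prod_(s < t) (alpha c T s) ^+ 2) * sqnorm zperp + sqnorm zpar.
Proof.
move=> t /andP [_ tT].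
have x0zpar : in_sub (x0 + zpar) (Z 0%N) by rewrite /in_sub linearD addmx_sub.
rewrite addrA (ctraj_split htheta hZ hP _ _ _ x0zpar hzperp tT) trajD
  addrAC [traj _ x0 t + _ - _]addrAC subrr add0r.
have zpar_zperp : dotv (traj theta zpar t) (traj theta zperp t) = 0 :=
  traj_in_orth_compl htheta hZ _ _ hzperp tT _ (traj_in_sub hZ _ _ hzpar tT).
by rewrite sqnormDZ_orth // !(sqnorm_traj htheta) // prodrXl addrC.
Qed.
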